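(* In the model described in the context, suppose $\triangle C=0$, and let $X(0)$ be the set of symmetric Stackelberg equilibria (symmetric leader reactions when all followers' forward positions are $0$), which depends on $\alpha_x$. (1) There exists a unique $\bar y<k$ such that, for $y\in[0,k]$, there exists $x\in X(0)$ with $y_j(\mathbf0,x\mathbf1)=y$ if and only if $y\le\bar y$ or $y=k$. Moreover $\bar y=\big(1+O(\tfrac1{\sqrt N})\big)\frac k2$. (2) There exists a unique $\bar\alpha_x\in\mathbb{R}_+$ such that $\alpha_x\le\bar\alpha_x$ iff there exists $x\in X(0)$ with $y_j(\mathbf0,x\mathbf1)\le\bar y$, and a unique $\underline\alpha_x\le\bar\alpha_x$ such that $\alpha_x\ge\underline\alpha_x$ iff there exists $x\in X(0)$ with $y_j(\mathbf0,x\mathbf1)=k$. Moreover $|X(0)|=2$ for all $\alpha_x\in[\underline\alpha_x,\bar\alpha_x]$.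
   Context: Model: $M\ge1$ leaders and $N\ge2$ followers; inverse demand $P(q)=\alpha-\beta q$, $\alpha,\beta>0$; leader marginal cost $C$, follower marginal cost $c$, $c\ge C>0$; follower capacity $k>0$. Leader $i$ produces $x_i\ge0$; follower $j$ has forward position $f_j\in\mathbb{R}$ and chooses spot production $y_j\in[0,k]$. Given $\mathbf f,\mathbf x$, the spot market is the game among followers where follower $j$ chooses $y_j\in[0,k]$ to maximize $P(\sum_ix_i+\sum_{j'}y_{j'})(y_j-f_j)-cy_j$; its unique Nash equilibrium is $\mathbf y(\mathbf f,\mathbf x)=(y_1(\mathbf f,\mathbf x),\dots,y_N(\mathbf f,\mathbf x))$. Leader $i$'s payoff is $\psi_i=(P(\sum_ix_i+\sum_{j'}y_{j'}(\mathbf f,\mathbf x))-C)x_i$; $\psi_i(\bar x;x\mathbf1,\mathbf f)$ denotes this payoff when leader $i$ produces $\bar x$ and all other leaders produce $x$. $X(0)=\{x\in\mathbb{R}_+:\psi_i(x;x\mathbf1,\mathbf0)\ge\psi_i(\bar x;x\mathbf1,\mathbf0)\ \forall\bar x\in\mathbb{R}_+,\ \forall i\}$. $\alpha_x=(\alpha-C)/\beta$, $\triangle C=(c-C)/\beta$. $O(\cdot)$ is standard Landau notation. *)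

From Stdlib Require Import Reals Lra ClassicalEpsilon.
Open Scope R_scope.

Fixpoint rsum (n : nat) (f : nat -> R) : R :=
  match n with O => 0 | S m => rsum m f + f m end.

Definition upd (f : nat -> R) (j : nat) (z : R) : nat -> R :=
  fun j' => if Nat.eqb j' j then z else f j'.

Definition Pd (alpha beta q : R) : R := alpha - beta * q.

Definition alpha_x (alpha beta C : R) : R := (alpha - C) / beta.
Definition deltaC (beta C c : R) : R := (c - C) / beta.

Definition follower_payoff (alpha beta c : R) (M N : nat)
  (f x y : nat -> R) (j : nat) : R :=
  Pd alpha beta (rsum M x + rsum N y) * (y j - f j) - c * y j.

Definition is_spot_NE (alpha beta c k : R) (M N : nat) (f x y : nat -> R) : Prop :=
  (forall j, (j < N)%nat -> 0 <= y j <= k) /\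
  (forall j, (j < N)%nat -> forall z, 0 <= z <= k ->
     follower_payoff alpha beta c M N f x (upd y j z) j
       <= follower_payoff alpha beta c M N f x y j).

(* y(f,x): THE spot market equilibrium (unique by the model's standing claim);
   chosen by Hilbert's epsilon. *)
Definition spot_eq (alpha beta c k : R) (M N : nat) (f x : nat -> R) : nat -> R :=
  epsilon (inhabits (fun _ => 0)) (is_spot_NE alpha beta c k M N f x).

Definition psi (alpha beta C c k : R) (M N : nat) (i : nat) (xb x : R) (f : nat -> R) : R :=
  let xs := upd (fun _ => x) i xb in
  (Pd alpha beta (rsum M xs + rsum N (spot_eq alpha beta c k M N f xs)) - C) * xb.

Definition inX0 (alpha beta C c k : R) (M N : nat) (x : R) : Prop :=
  0 <= x /\
  forall xb, 0 <= xb -> forall i, (i < M)%nat ->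
    psi alpha beta C c k M N i xb x (fun _ => 0) <= psi alpha beta C c k M N i x x (fun _ => 0).

Definition yj0 (alpha beta c k : R) (M N : nat) (x : R) (j : nat) : R :=
  spot_eq alpha beta c k M N (fun _ => 0) (fun _ => x) j.

Definition P1 (beta C c k : R) (M N : nat) (yb : R) : Prop :=
  forall j, (j < N)%nat -> forall y, 0 <= y <= k ->
    ((exists alpha, 0 < alpha /\ exists x,
        inX0 alpha beta C c k M N x /\ yj0 alpha beta c k M N x j = y)
     <-> (y <= yb \/ y = k)).

Definition P2up (beta C c k : R) (M N : nat) (yb ab : R) : Prop :=
  forall alpha, 0 < alpha -> forall j, (j < N)%nat ->
    (alpha_x alpha beta C <= ab <->
     exists x, inX0 alpha beta C c k M N x /\ yj0 alpha beta c k M N x j <= yb).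

Definition P2low (beta C c k : R) (M N : nat) (al : R) : Prop :=
  forall alpha, 0 < alpha -> forall j, (j < N)%nat ->
    (al <= alpha_x alpha beta C <->
     exists x, inX0 alpha beta C c k M N x /\ yj0 alpha beta c k M N x j = k).

Definition X0_card2 (alpha beta C c k : R) (M N : nat) : Prop :=
  exists x1 x2, x1 <> x2 /\
    forall x, inX0 alpha beta C c k M N x <-> (x = x1 \/ x = x2).

(* With [c = C], the spot market facing leader output [X] has the symmetric
   equilibrium [y = clamp k ((alpha_x - X) / (N + 1))], so a leader facing
   [S = alpha_x - (M - 1) x] maximises [xb * r (S - xb)], where the margin [r u]
   is [u / (N + 1)] while the followers are below capacity and [u - N k] once
   they are at capacity.  The two regimes have the candidates [S / 2] and
   [(S - N k) / 2], worth [S^2 / (4 (N + 1))] and [(S - N k)^2 / 4]; with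
   [m = sqrt (N + 1)] they tie exactly at [S = k m (m + 1)].  So the symmetric
   equilibria are [alpha_x / (M + 1)], with follower output
   [alpha_x / ((M + 1) (N + 1)) <= k (m + 1) / (2 m)], as long as [alpha_x] is at
   most [(M + 1) k m (m + 1) / 2], and [(alpha_x - N k) / (M + 1)], with followers
   at capacity, once [alpha_x >= N k + (M + 1) k (m + 1) / 2].  Finally
   [k (m + 1) / (2 m) = (1 + 1 / m) k / 2]. *)

From Stdlib Require Import Reals Lra Lia Psatz ClassicalEpsilon.
Open Scope R_scope.

Lemma rsum_ext n f h : (forall j, (j < n)%nat -> f j = h j) -> rsum n f = rsum n h.
Proof.
  induction n as [|n IH]; intros Hfh; simpl; auto.
  rewrite IH, Hfh by (auto with arith). reflexivity.
Qed.

Lemma rsum_const n f v : (forall j, (j < n)%nat -> f j = v) -> rsum n f = INR n * v.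
Proof.
  induction n as [|n IH]; intros Hf; cbn [rsum]; [simpl; ring|].
  rewrite IH, Hf, S_INR by (auto with arith). ring.
Qed.

Lemma rsum_upd n f i z : (i < n)%nat -> rsum n (upd f i z) = rsum n f - f i + z.
Proof.
  induction n as [|n IH]; intros Hi; [lia|]. simpl.
  destruct (Nat.eq_dec i n) as [->|Hne].
  - rewrite (rsum_ext n (upd f n z) f).
    + unfold upd. rewrite Nat.eqb_refl. ring.
    + intros j Hj. unfold upd. destruct (Nat.eqb_spec j n); [lia|auto].
  - rewrite IH by lia. unfold upd at 1.
    destruct (Nat.eqb_spec n i); [lia|]. ring.
Qed.

Definition clamp (k v : R) : R := Rmin k (Rmax 0 v).

Ltac clamp_cases :=
  unfold clamp, Rmin, Rmax in *; repeat destruct Rle_dec;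
  repeat match goal with H : ~ _ <= _ |- _ => apply Rnot_le_lt in H end.

Section Clamp.

Variable k : R.
Hypothesis k_pos : 0 < k.

Lemma clamp_bounds v : 0 <= clamp k v <= k.
Proof. clamp_cases; lra. Qed.

Lemma clamp_nonpos v : v <= 0 -> clamp k v = 0.
Proof. clamp_cases; lra. Qed.

Lemma clamp_id v : 0 <= v <= k -> clamp k v = v.
Proof. clamp_cases; lra. Qed.

Lemma clamp_cap v : k <= v -> clamp k v = k.
Proof. clamp_cases; lra. Qed.

Lemma clamp_variational d y :
  y = clamp k d <-> 0 <= y <= k /\ forall z, 0 <= z <= k -> (z - y) * (d - z) <= 0.
Proof.
  split.
  - intros ->. split; [apply clamp_bounds|]. intros z Hz.
    clamp_cases; pose proof (Rle_0_sqr (z - d)); unfold Rsqr in *; nra.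
  - intros [Hy Hdev]. clamp_cases;
      first [ pose proof (Hdev (y / 2)); nra
            | pose proof (Hdev ((y + k) / 2)); nra
            | pose proof (Hdev ((y + d) / 2)); nra ].
Qed.

Lemma clamp_fixpoint n A v : 0 <= n ->
  v = clamp k (A - n * v) <-> v = clamp k (A / (n + 1)).
Proof.
  intros Hn.
  assert (HA : A = (n + 1) * (A / (n + 1))) by (field; lra).
  set (q := A / (n + 1)) in *.
  split; intros Hv.
  - pose proof (clamp_bounds (A - n*v)). rewrite HA in *. clamp_cases; nra.
  - rewrite Hv, HA at 1. clamp_cases; nra.
Qed.

End Clamp.

Section SpotMarket.

Variables (alpha beta c k : R) (M N : nat) (xs : nat -> R).
Hypotheses (beta_pos : 0 < beta) (k_pos : 0 < k).

Let A := alpha_x alpha beta c - rsum M xs.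

Lemma follower_payoff_gain y j z : (j < N)%nat ->
  follower_payoff alpha beta c M N (fun _ => 0) xs (upd y j z) j
  - follower_payoff alpha beta c M N (fun _ => 0) xs y j
  = beta * ((z - y j) * (A - rsum N y - z)).
Proof.
  intros Hj. unfold follower_payoff, Pd, A, alpha_x. rewrite rsum_upd by exact Hj.
  replace (upd y j z j) with z by (unfold upd; now rewrite Nat.eqb_refl). field. lra.
Qed.

Lemma spot_NE_iff y :
  is_spot_NE alpha beta c k M N (fun _ => 0) xs y <->
  forall j, (j < N)%nat -> y j = clamp k (A - rsum N y).
Proof.
  split.
  - intros [Hbd Hbr] j Hj. apply clamp_variational; [exact k_pos|].
    split; [auto|]. intros z Hz.
    pose proof (Hbr j Hj z Hz). pose proof (follower_payoff_gain y j z Hj). nra.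
  - intros Hy. split.
    + intros j Hj. rewrite Hy by exact Hj. apply clamp_bounds, k_pos.
    + intros j Hj z Hz.
      pose proof (Hy j Hj) as Hyj. apply clamp_variational in Hyj; [|exact k_pos].
      pose proof (proj2 Hyj z Hz). pose proof (follower_payoff_gain y j z Hj). nra.
Qed.

Lemma spot_eq_sym j : (j < N)%nat ->
  spot_eq alpha beta c k M N (fun _ => 0) xs j = clamp k (A / (INR N + 1)).
Proof.
  intros Hj. set (w := clamp k (A / (INR N + 1))).
  assert (HN : 0 <= INR N) by apply pos_INR.
  assert (Hw_NE : is_spot_NE alpha beta c k M N (fun _ => 0) xs (fun _ => w)).
  { apply spot_NE_iff. intros j' _. rewrite (rsum_const N _ w) by auto.
    apply clamp_fixpoint; auto. }
  pose proof (epsilon_spec (inhabits (fun _ : nat => 0))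
    (is_spot_NE alpha beta c k M N (fun _ => 0) xs) (ex_intro _ _ Hw_NE)) as Hy.
  fold (spot_eq alpha beta c k M N (fun _ => 0) xs) in Hy.
  set (y := spot_eq alpha beta c k M N (fun _ => 0) xs) in *.
  rewrite spot_NE_iff in Hy.
  set (d := A - rsum N y) in Hy.
  assert (Hsum : rsum N y = INR N * clamp k d) by (apply rsum_const; exact Hy).
  rewrite (Hy j Hj). apply clamp_fixpoint; auto.
  unfold d at 1. rewrite Hsum. reflexivity.
Qed.

End SpotMarket.

(* When the leaders leave [u = alpha_x - (leaders' output)] to [n] followers in
   symmetric spot equilibrium, the price margin is [P - C = beta * resid n k u];
   [S] stands for [alpha_x] minus the output of the other leaders. *)
Definition resid (n k u : R) : R := u - n * clamp k (u / (n + 1)).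
Definition profit (n k S xb : R) : R := xb * resid n k (S - xb).
Definition best_response (n k S x : R) : Prop :=
  forall xb, 0 <= xb -> profit n k S xb <= profit n k S x.
Definition sym_leader_eq (M n k a x : R) : Prop :=
  0 <= x /\ best_response n k (a - (M - 1) * x) x.
Definition spot_output (M n k a x : R) : R := clamp k ((a - M * x) / (n + 1)).

Section Reduction.

Variables (alpha beta C k : R) (M N : nat).
Hypotheses (M_pos : (1 <= M)%nat) (beta_pos : 0 < beta) (k_pos : 0 < k).

Lemma psi_sym i xb x : (i < M)%nat ->
  psi alpha beta C C k M N i xb x (fun _ => 0)
  = beta * profit (INR N) k (alpha_x alpha beta C - (INR M - 1) * x) xb.
Proof.
  intros Hi. unfold psi; cbv zeta.
  set (xs := upd (fun _ => x) i xb).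
  assert (HX : rsum M xs = INR M * x - x + xb).
  { unfold xs. rewrite rsum_upd, (rsum_const M _ x) by auto. ring. }
  assert (HY : rsum N (spot_eq alpha beta C k M N (fun _ => 0) xs)
               = INR N * clamp k ((alpha_x alpha beta C - rsum M xs) / (INR N + 1)))
    by (apply rsum_const; intros; apply spot_eq_sym; auto).
  unfold profit, resid.
  replace (alpha_x alpha beta C - (INR M - 1) * x - xb)
    with (alpha_x alpha beta C - rsum M xs) by (rewrite HX; ring).
  rewrite HY. unfold Pd, alpha_x. rewrite HX. field. lra.
Qed.

Lemma inX0_sym x :
  inX0 alpha beta C C k M N x <->
  sym_leader_eq (INR M) (INR N) k (alpha_x alpha beta C) x.
Proof.
  unfold inX0, sym_leader_eq, best_response. split.
  - intros [Hx Hbr]. split; [exact Hx|]. intros xb Hxb.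
    specialize (Hbr xb Hxb 0%nat ltac:(lia)). rewrite !psi_sym in Hbr by lia.
    apply Rmult_le_reg_l in Hbr; assumption.
  - intros [Hx Hbr]. split; [exact Hx|]. intros xb Hxb i Hi.
    rewrite !psi_sym by exact Hi. apply Rmult_le_compat_l; [lra|]. auto.
Qed.

Lemma yj0_sym x j : (j < N)%nat ->
  yj0 alpha beta C k M N x j = spot_output (INR M) (INR N) k (alpha_x alpha beta C) x.
Proof.
  intros Hj. unfold yj0. rewrite spot_eq_sym, (rsum_const M _ x) by auto.
  reflexivity.
Qed.

End Reduction.

Lemma mul_sub_le_half_sq x T : x * (T - x) <= T / 2 * (T / 2).
Proof. pose proof (Rle_0_sqr (x - T / 2)). unfold Rsqr in *. nra. Qed.

Lemma mul_sub_half_sq_eq x T : T / 2 * (T / 2) <= x * (T - x) -> x = T / 2.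
Proof.
  intros H. pose proof (Rle_0_sqr (x - T / 2)) as Hsq. unfold Rsqr in Hsq.
  assert (Hz : (x - T / 2) * (x - T / 2) = 0) by nra.
  apply Rmult_integral in Hz. lra.
Qed.

(* The leader's optimal profits with the followers below capacity, resp. pushed
   to capacity; for [m = sqrt (n + 1)] the two tie at [S = switch_point m k]. *)
Definition value_interior (n S : R) : R := S / 2 * (S / 2) / (n + 1).
Definition value_capacity (n k S : R) : R := (S - n * k) / 2 * ((S - n * k) / 2).
Definition switch_point (m k : R) : R := k * m * (m + 1).

Lemma switch_point_sub n m k : m * m = n + 1 -> switch_point m k - n * k = k * (m + 1).
Proof. intros Hmn. unfold switch_point. replace n with (m * m - 1) by lra. ring. Qed.

Section Leader.

Variables n m k : R.
Hypotheses (m_gt1 : 1 < m) (m_sq : m * m = n + 1) (k_pos : 0 < k).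

Let n_pos : 0 < n.
Proof. nra. Qed.

Let share_def u : u = (n + 1) * (u / (n + 1)).
Proof. field. lra. Qed.

Lemma resid_nonpos u : u <= 0 -> resid n k u = u.
Proof.
  intros Hu. pose proof (share_def u). unfold resid.
  rewrite clamp_nonpos by (auto; nra). ring.
Qed.

Lemma resid_share u : 0 <= u <= (n + 1) * k -> resid n k u = u / (n + 1).
Proof.
  intros Hu. pose proof (share_def u). unfold resid.
  rewrite clamp_id by (auto; nra). nra.
Qed.

Lemma resid_capacity u : (n + 1) * k <= u -> resid n k u = u - n * k.
Proof.
  intros Hu. pose proof (share_def u). unfold resid.
  rewrite clamp_cap by (auto; nra). ring.
Qed.

Lemma resid_ge_share u : 0 <= u -> u / (n + 1) <= resid n k u.
Proof.
  intros Hu. pose proof (share_def u).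
  destruct (Rle_dec u ((n + 1) * k)).
  - rewrite resid_share by lra. lra.
  - rewrite resid_capacity by lra. nra.
Qed.

Lemma resid_ge_capacity u : u - n * k <= resid n k u.
Proof. unfold resid. pose proof (clamp_bounds k k_pos (u / (n + 1))). nra. Qed.

Lemma resid_cases u :
  resid n k u <= u / (n + 1) \/ ((n + 1) * k <= u /\ resid n k u = u - n * k).
Proof.
  pose proof (share_def u).
  destruct (Rle_dec u 0); [|destruct (Rle_dec u ((n + 1) * k))].
  - left. rewrite resid_nonpos by lra. nra.
  - left. rewrite resid_share by lra. lra.
  - right. split; [lra|]. apply resid_capacity. lra.
Qed.

Lemma profit_le_values S xb : 0 <= xb ->
  profit n k S xb <= value_interior n S \/
  ((n + 1) * k <= S /\ profit n k S xb <= value_capacity n k S).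
Proof.
  intros Hxb. unfold profit, value_interior, value_capacity.
  destruct (resid_cases (S - xb)) as [Hr|[Hcap Hr]].
  - left. apply Rle_trans with (xb * (S - xb) / (n + 1)).
    + unfold Rdiv in *. rewrite Rmult_assoc. apply Rmult_le_compat_l; assumption.
    + unfold Rdiv. apply Rmult_le_compat_r.
      * left. apply Rinv_0_lt_compat. lra.
      * apply mul_sub_le_half_sq.
  - right. split; [lra|]. rewrite Hr.
    replace (S - xb - n * k) with (S - n * k - xb) by ring.
    apply mul_sub_le_half_sq.
Qed.

Lemma profit_half_ge S : 0 <= S -> value_interior n S <= profit n k S (S / 2).
Proof.
  intros HS. unfold profit, value_interior.
  replace (S - S / 2) with (S / 2) by field.
  replace (S / 2 * (S / 2) / (n + 1)) with (S / 2 * (S / 2 / (n + 1))) by (field; lra).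
  apply Rmult_le_compat_l; [lra|]. apply resid_ge_share. lra.
Qed.

Lemma profit_capacity_ge S : n * k <= S ->
  value_capacity n k S <= profit n k S ((S - n * k) / 2).
Proof.
  intros HS. unfold profit, value_capacity.
  pose proof (resid_ge_capacity (S - (S - n * k) / 2)).
  apply Rmult_le_compat_l; lra.
Qed.

Lemma value_gap_factor S : n * k <= S ->
  exists w, 0 < w /\ value_capacity n k S - value_interior n S = (S - switch_point m k) * w.
Proof.
  intros HS. pose proof (switch_point_sub n m k m_sq).
  exists ((m - 1) * (m * (S - n * k) + S) / (4 * (m * m))). split.
  - apply Rdiv_lt_0_compat; [apply Rmult_lt_0_compat|]; nra.
  - unfold value_capacity, value_interior, switch_point.
    rewrite <- m_sq. replace n with (m * m - 1) by lra. field. lra.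
Qed.

Lemma best_response_nonpos S : S <= 0 -> best_response n k S 0.
Proof.
  intros HS xb Hxb. unfold profit. rewrite resid_nonpos by lra. nra.
Qed.

Lemma best_response_interior S : 0 <= S <= switch_point m k ->
  best_response n k S (S / 2).
Proof.
  intros HS xb Hxb. pose proof (switch_point_sub n m k m_sq).
  assert (Hval : profit n k S (S / 2) = value_interior n S).
  { unfold profit, value_interior. rewrite resid_share by nra. field. lra. }
  rewrite Hval. destruct (profit_le_values S xb Hxb) as [Hle|[Hcap Hle]]; [exact Hle|].
  destruct (value_gap_factor S) as [w [Hw Hgap]]; nra.
Qed.

Lemma best_response_capacity S : switch_point m k <= S ->
  best_response n k S ((S - n * k) / 2).
Proof.
  intros HS xb Hxb. pose proof (switch_point_sub n m k m_sq).
  assert (Hval : profit n k S ((S - n * k) / 2) = value_capacity n k S).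
  { unfold profit, value_capacity. rewrite resid_capacity by nra. field. }
  rewrite Hval. destruct (profit_le_values S xb Hxb) as [Hle|[Hcap Hle]]; [|exact Hle].
  destruct (value_gap_factor S) as [w [Hw Hgap]]; nra.
Qed.

Lemma best_response_nonpos_inv S x : S <= 0 -> 0 <= x ->
  best_response n k S x -> x = 0.
Proof.
  intros HS Hx Hbr. pose proof (Hbr 0 (Rle_refl 0)) as H0.
  unfold profit in H0. rewrite !resid_nonpos in H0 by lra.
  assert (x <= 0) by nra. lra.
Qed.

Lemma best_response_sub_pos S x : 0 < S -> 0 <= x ->
  best_response n k S x -> 0 < S - x.
Proof.
  intros HS Hx Hbr. destruct (Rle_dec (S - x) 0) as [Hsx|]; [exfalso|lra].
  pose proof (Hbr (S / 2) ltac:(lra)) as Hhalf.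
  pose proof (profit_half_ge S ltac:(lra)).
  assert (0 < value_interior n S)
    by (unfold value_interior; apply Rdiv_lt_0_compat; nra).
  unfold profit at 2 in Hhalf. rewrite resid_nonpos in Hhalf by lra. nra.
Qed.

Lemma best_response_interior_inv S x : 0 <= x -> best_response n k S x ->
  0 <= S - x <= (n + 1) * k -> x = S / 2 /\ S <= switch_point m k.
Proof.
  intros Hx Hbr Hsx. pose proof (switch_point_sub n m k m_sq).
  assert (Hval : profit n k S x * (n + 1) = x * (S - x)).
  { unfold profit. rewrite resid_share by exact Hsx. field. lra. }
  assert (Hvi : value_interior n S * (n + 1) = S / 2 * (S / 2))
    by (unfold value_interior; field; lra).
  pose proof (profit_half_ge S ltac:(lra)).
  pose proof (Hbr (S / 2) ltac:(lra)).
  assert (Hhalf : x = S / 2) by (apply mul_sub_half_sq_eq; nra).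
  split; [exact Hhalf|].
  destruct (Rle_dec S (switch_point m k)) as [|Hgt]; [assumption|exfalso].
  apply Rnot_le_lt in Hgt.
  destruct (value_gap_factor S ltac:(nra)) as [w [Hw Hgap]].
  pose proof (profit_capacity_ge S ltac:(nra)).
  pose proof (Hbr ((S - n * k) / 2) ltac:(nra)).
  subst x. nra.
Qed.

Lemma best_response_capacity_inv S x : 0 <= x -> best_response n k S x ->
  (n + 1) * k <= S - x -> x = (S - n * k) / 2 /\ switch_point m k <= S.
Proof.
  intros Hx Hbr Hsx. pose proof (switch_point_sub n m k m_sq).
  assert (Hval : profit n k S x = x * (S - n * k - x)).
  { unfold profit. rewrite resid_capacity by exact Hsx. ring. }
  pose proof (profit_capacity_ge S ltac:(nra)).
  pose proof (Hbr ((S - n * k) / 2) ltac:(nra)).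
  unfold value_capacity in *.
  assert (Hcap : x = (S - n * k) / 2) by (apply mul_sub_half_sq_eq; nra).
  split; [exact Hcap|].
  destruct (Rle_dec (switch_point m k) S) as [|Hlt]; [assumption|exfalso].
  apply Rnot_le_lt in Hlt.
  destruct (value_gap_factor S ltac:(nra)) as [w [Hw Hgap]].
  pose proof (profit_half_ge S ltac:(nra)).
  pose proof (Hbr (S / 2) ltac:(nra)).
  unfold value_capacity in Hgap. subst x. nra.
Qed.

Lemma best_response_iff S x : 0 <= x ->
  best_response n k S x <->
  (S <= 0 /\ x = 0) \/ (0 <= S <= switch_point m k /\ x = S / 2) \/
  (switch_point m k <= S /\ x = (S - n * k) / 2).
Proof.
  intros Hx. split.
  - intros Hbr. destruct (Rle_dec S 0) as [HS|HS].
    + left. split; [exact HS|]. exact (best_response_nonpos_inv S x HS Hx Hbr).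
    + apply Rnot_le_lt in HS. pose proof (best_response_sub_pos S x HS Hx Hbr).
      right. destruct (Rle_dec (S - x) ((n + 1) * k)).
      * left. destruct (best_response_interior_inv S x Hx Hbr) as [-> Hle]; [lra|].
        split; [lra|reflexivity].
      * right. destruct (best_response_capacity_inv S x Hx Hbr) as [-> Hle]; [lra|].
        split; [lra|reflexivity].
  - intros [[HS ->]|[[HS ->]|[HS ->]]].
    + apply best_response_nonpos, HS.
    + apply best_response_interior, HS.
    + apply best_response_capacity, HS.
Qed.

End Leader.

Definition alpha_hi (M m k : R) : R := (M + 1) * switch_point m k / 2.
Definition alpha_lo (M n m k : R) : R := n * k + (M + 1) * (switch_point m k - n * k) / 2.
Definition ybar (m k : R) : R := k * (m + 1) / (2 * m).

Section SymmetricEquilibria.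

Variables M n m k : R.
Hypotheses (M_ge1 : 1 <= M) (m_gt1 : 1 < m) (m_sq : m * m = n + 1) (k_pos : 0 < k).

Lemma sym_leader_eq_iff a x :
  sym_leader_eq M n k a x <->
  (a <= 0 /\ x = 0) \/ (0 <= a <= alpha_hi M m k /\ x = a / (M + 1)) \/
  (alpha_lo M n m k <= a /\ x = (a - n * k) / (M + 1)).
Proof.
  pose proof (switch_point_sub n m k m_sq) as Hsub.
  assert (Hgap : 0 < switch_point m k - n * k) by (rewrite Hsub; nra).
  unfold sym_leader_eq, alpha_hi, alpha_lo. split.
  - intros [Hx Hbr]. apply (best_response_iff n m k) in Hbr; auto.
    destruct Hbr as [[HS ->]|[[HS Hx2]|[HS Hx2]]].
    + left. lra.
    + right; left. assert (Ha : a = (M + 1) * x) by lra.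
      split; [split; nra|]. rewrite Ha. field. lra.
    + right; right. assert (Ha : a = n * k + (M + 1) * x) by lra.
      split; [nra|]. rewrite Ha. field. lra.
  - intros [[Ha Hx]|[[Ha Hx]|[Ha Hx]]].
    + subst x. split; [lra|]. apply (best_response_iff n m k); auto; lra.
    + assert (Hax : a = (M + 1) * x) by (rewrite Hx; field; lra). clear Hx.
      assert (0 <= x) by nra. split; [assumption|].
      apply (best_response_iff n m k); auto. right; left. split; [split|]; nra.
    + assert (Hax : a = n * k + (M + 1) * x) by (rewrite Hx; field; lra). clear Hx.
      assert (0 <= x) by nra. split; [assumption|].
      apply (best_response_iff n m k); auto. right; right. split; nra.
Qed.

Lemma alpha_hi_ybar : alpha_hi M m k = (M + 1) * (n + 1) * ybar m k.
Proof. unfold alpha_hi, switch_point, ybar. rewrite <- m_sq. field. lra. Qed.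

Lemma share_le_ybar_iff a :
  a / ((M + 1) * (n + 1)) <= ybar m k <-> a <= alpha_hi M m k.
Proof.
  rewrite alpha_hi_ybar. assert (HP : 0 < (M + 1) * (n + 1)) by nra.
  set (P := (M + 1) * (n + 1)) in *.
  assert (Hq : a / P * P = a) by (field; lra).
  split; intros H; nra.
Qed.

Lemma ybar_bounds : 0 < ybar m k < k.
Proof.
  unfold ybar. split.
  - apply Rdiv_lt_0_compat; nra.
  - apply Rmult_lt_reg_r with (2 * m); [lra|]. field_simplify; nra.
Qed.

Lemma alpha_lo_bounds : 0 < alpha_lo M n m k <= alpha_hi M m k.
Proof.
  pose proof (switch_point_sub n m k m_sq) as Hsub.
  assert (0 < n) by nra.
  unfold alpha_lo, alpha_hi. rewrite Hsub.
  replace (switch_point m k) with (n * k + k * (m + 1)) by lra.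
  assert (0 <= n * k) by nra. assert (0 < k * (m + 1)) by nra.
  split; nra.
Qed.

Lemma sym_eq_nonpos a : a <= 0 ->
  sym_leader_eq M n k a 0 /\ spot_output M n k a 0 = 0.
Proof.
  intros Ha. split.
  - apply sym_leader_eq_iff. left. lra.
  - unfold spot_output. apply (clamp_nonpos k k_pos).
    apply Rmult_le_reg_r with (n + 1); [nra|]. field_simplify; nra.
Qed.

Lemma sym_eq_interior a : 0 <= a <= alpha_hi M m k ->
  sym_leader_eq M n k a (a / (M + 1)) /\
  spot_output M n k a (a / (M + 1)) = a / ((M + 1) * (n + 1)).
Proof.
  intros Ha. split.
  - apply sym_leader_eq_iff. right; left. lra.
  - pose proof ybar_bounds. pose proof (proj2 (share_le_ybar_iff a) (proj2 Ha)).
    unfold spot_output.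
    replace ((a - M * (a / (M + 1))) / (n + 1)) with (a / ((M + 1) * (n + 1)))
      by (field; nra).
    apply clamp_id. split; [|lra].
    unfold Rdiv. apply Rmult_le_pos; [lra|]. left. apply Rinv_0_lt_compat. nra.
Qed.

Lemma sym_eq_capacity a : alpha_lo M n m k <= a ->
  sym_leader_eq M n k a ((a - n * k) / (M + 1)) /\
  spot_output M n k a ((a - n * k) / (M + 1)) = k.
Proof.
  intros Ha. split.
  - apply sym_leader_eq_iff. right; right. lra.
  - pose proof (switch_point_sub n m k m_sq) as Hsub.
    unfold alpha_lo in Ha. rewrite Hsub in Ha.
    set (x := (a - n * k) / (M + 1)).
    assert (Hax : a = n * k + (M + 1) * x) by (unfold x; field; lra).
    assert (Hxk : k * (m + 1) / 2 <= x) by nra.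
    unfold spot_output. apply (clamp_cap k k_pos).
    apply Rmult_le_reg_r with (n + 1); [nra|]. field_simplify; nra.
Qed.

Lemma sym_eq_output_cases a x : sym_leader_eq M n k a x ->
  (a <= alpha_hi M m k /\ spot_output M n k a x <= ybar m k) \/
  (alpha_lo M n m k <= a /\ spot_output M n k a x = k).
Proof.
  intros Heq. pose proof ybar_bounds. pose proof alpha_lo_bounds.
  apply sym_leader_eq_iff in Heq as [[Ha ->]|[[Ha ->]|[Ha ->]]].
  - left. rewrite (proj2 (sym_eq_nonpos a Ha)). lra.
  - left. rewrite (proj2 (sym_eq_interior a Ha)), share_le_ybar_iff. lra.
  - right. split; [exact Ha|]. exact (proj2 (sym_eq_capacity a Ha)).
Qed.

Lemma sym_eq_output_attained v : 0 <= v <= ybar m k \/ v = k ->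
  exists a x, 0 <= a /\ sym_leader_eq M n k a x /\ spot_output M n k a x = v.
Proof.
  pose proof alpha_lo_bounds. intros [Hv| ->].
  - assert (HP : 0 < (M + 1) * (n + 1)) by nra.
    set (a := (M + 1) * (n + 1) * v).
    assert (Ha : 0 <= a <= alpha_hi M m k) by (rewrite alpha_hi_ybar; unfold a; nra).
    destruct (sym_eq_interior a Ha) as [Heq Hout].
    exists a, (a / (M + 1)). split; [lra|]. split; [exact Heq|].
    rewrite Hout. unfold a. field. nra.
  - exists (alpha_lo M n m k). eexists. split; [lra|].
    apply sym_eq_capacity, Rle_refl.
Qed.

Lemma sym_eq_output_le_ybar_iff a :
  (exists x, sym_leader_eq M n k a x /\ spot_output M n k a x <= ybar m k)
  <-> a <= alpha_hi M m k.
Proof.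
  pose proof ybar_bounds. split.
  - intros [x [Heq Hy]]. destruct (sym_eq_output_cases a x Heq); [tauto|lra].
  - intros Ha. destruct (Rle_dec a 0) as [Ha0|Ha0].
    + exists 0. rewrite (proj2 (sym_eq_nonpos a Ha0)). split; [apply sym_eq_nonpos|]; lra.
    + exists (a / (M + 1)). destruct (sym_eq_interior a) as [Heq Hy]; [lra|].
      split; [exact Heq|]. rewrite Hy, share_le_ybar_iff. exact Ha.
Qed.

Lemma sym_eq_output_cap_iff a :
  (exists x, sym_leader_eq M n k a x /\ spot_output M n k a x = k)
  <-> alpha_lo M n m k <= a.
Proof.
  pose proof ybar_bounds. split.
  - intros [x [Heq Hy]]. destruct (sym_eq_output_cases a x Heq); [lra|tauto].
  - intros Ha. eexists. apply sym_eq_capacity, Ha.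
Qed.

Lemma sym_eq_two a : alpha_lo M n m k <= a <= alpha_hi M m k ->
  a / (M + 1) <> (a - n * k) / (M + 1) /\
  forall x, sym_leader_eq M n k a x <-> x = a / (M + 1) \/ x = (a - n * k) / (M + 1).
Proof.
  intros Ha. pose proof alpha_lo_bounds. assert (0 < n) by nra. split.
  - intros E. apply (Rmult_eq_compat_r (M + 1)) in E.
    field_simplify in E; nra.
  - intros x. rewrite sym_leader_eq_iff. split.
    + intros [[Ha0 _]|[[_ Hx]|[_ Hx]]]; [lra|left|right]; exact Hx.
    + intros [Hx|Hx]; right; [left|right]; split; auto; lra.
Qed.

End SymmetricEquilibria.

Lemma le_threshold_unique t1 t2 : 0 <= t1 -> 0 <= t2 ->
  (forall a, 0 <= a -> (a <= t1 <-> a <= t2)) -> t1 = t2.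
Proof.
  intros H1 H2 Ht. apply Rle_antisym.
  - apply (Ht t1 H1), Rle_refl.
  - apply (Ht t2 H2), Rle_refl.
Qed.

Lemma ge_threshold_unique t1 t2 : 0 < t1 ->
  (forall a, 0 <= a -> (t1 <= a <-> t2 <= a)) -> t1 = t2.
Proof.
  intros H1 Ht. apply Rle_antisym.
  - destruct (Rle_dec t1 t2) as [|Hlt]; [assumption|exfalso].
    apply Rnot_le_lt in Hlt.
    assert (H : t1 <= Rmax t2 0) by (apply (Ht _ (Rmax_r t2 0)), Rmax_l).
    unfold Rmax in H. destruct Rle_dec; lra.
  - apply (Ht t1 ltac:(lra)), Rle_refl.
Qed.

Lemma le_or_cap_threshold_unique k t1 t2 : 0 <= t1 < k -> t2 < k ->
  (forall y, 0 <= y <= k -> (y <= t1 \/ y = k <-> y <= t2 \/ y = k)) -> t1 = t2.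
Proof.
  intros H1 H2 Ht. destruct (Rtotal_order t1 t2) as [Hlt|[Heq|Hgt]]; [exfalso| |exfalso].
  - destruct (proj2 (Ht t2 ltac:(lra)) (or_introl (Rle_refl _))); lra.
  - exact Heq.
  - destruct (proj1 (Ht t1 ltac:(lra)) (or_introl (Rle_refl _))); lra.
Qed.

Section Model.

Variables (M N : nat) (beta C k : R).
Hypotheses (M_pos : (1 <= M)%nat) (N_ge2 : (2 <= N)%nat)
  (beta_pos : 0 < beta) (C_pos : 0 < C) (k_pos : 0 < k).

Local Notation m := (sqrt (INR N + 1)).

Let M_ge1 : 1 <= INR M.
Proof. apply (le_INR 1). exact M_pos. Qed.

Let m_sq : m * m = INR N + 1.
Proof. apply sqrt_sqrt. pose proof (pos_INR N). lra. Qed.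

Let m_gt1 : 1 < m.
Proof.
  pose proof (sqrt_pos (INR N + 1)). pose proof (le_INR 2 N N_ge2) as H2.
  simpl in H2. nra.
Qed.

Let N_pos : (0 < N)%nat.
Proof. lia. Qed.

Lemma alpha_x_shift a : alpha_x (C + beta * a) beta C = a.
Proof. unfold alpha_x. field. lra. Qed.

Let shift_pos a : 0 <= a -> 0 < C + beta * a.
Proof. intros Ha. nra. Qed.

Lemma model_P1 : P1 beta C C k M N (ybar m k).
Proof.
  intros j Hj y Hy. split.
  - intros [alpha [_ [x [HX Hyj]]]].
    rewrite inX0_sym in HX by auto. rewrite yj0_sym in Hyj by auto.
    destruct (sym_eq_output_cases _ _ _ _ M_ge1 m_gt1 m_sq k_pos _ _ HX)
      as [[_ Hle]|[_ Hcap]]; [left|right]; lra.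
  - intros Hv. pose proof (ybar_bounds m k m_gt1 k_pos).
    destruct (sym_eq_output_attained _ _ _ _ M_ge1 m_gt1 m_sq k_pos y) as [a [x [Ha [Heq Hout]]]].
    { destruct Hv; [left|right]; lra. }
    exists (C + beta * a). split; [apply shift_pos, Ha|]. exists x.
    rewrite inX0_sym, yj0_sym, alpha_x_shift by auto. split; assumption.
Qed.

Lemma model_thresholds :
  ybar m k < k /\ 0 <= alpha_hi (INR M) m k /\
  alpha_lo (INR M) (INR N) m k <= alpha_hi (INR M) m k.
Proof.
  pose proof (ybar_bounds m k m_gt1 k_pos).
  pose proof (alpha_lo_bounds _ _ _ _ M_ge1 m_gt1 m_sq k_pos).
  repeat split; lra.
Qed.

Lemma model_P1_unique y' : y' < k -> P1 beta C C k M N y' -> y' = ybar m k.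
Proof.
  intros Hy' HP. pose proof (ybar_bounds m k m_gt1 k_pos).
  symmetry. apply (le_or_cap_threshold_unique k); [lra|exact Hy'|].
  intros y Hy. rewrite <- (model_P1 0%nat N_pos y Hy). exact (HP 0%nat N_pos y Hy).
Qed.

Lemma model_P2up : P2up beta C C k M N (ybar m k) (alpha_hi (INR M) m k).
Proof.
  intros alpha _ j Hj.
  rewrite <- (sym_eq_output_le_ybar_iff _ _ _ _ M_ge1 m_gt1 m_sq k_pos).
  split; intros [x Hx]; exists x; rewrite inX0_sym, yj0_sym in *; auto.
Qed.

Lemma model_P2low : P2low beta C C k M N (alpha_lo (INR M) (INR N) m k).
Proof.
  intros alpha _ j Hj.
  rewrite <- (sym_eq_output_cap_iff _ _ _ _ M_ge1 m_gt1 m_sq k_pos).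
  split; intros [x Hx]; exists x; rewrite inX0_sym, yj0_sym in *; auto.
Qed.

Lemma model_P2up_unique ab : 0 <= ab -> P2up beta C C k M N (ybar m k) ab ->
  ab = alpha_hi (INR M) m k.
Proof.
  intros Hab HP. pose proof (alpha_lo_bounds _ _ _ _ M_ge1 m_gt1 m_sq k_pos).
  apply le_threshold_unique; [exact Hab|lra|]. intros a Ha.
  rewrite <- (alpha_x_shift a).
  rewrite (HP _ (shift_pos a Ha) 0%nat N_pos), (model_P2up _ (shift_pos a Ha) 0%nat N_pos).
  reflexivity.
Qed.

Lemma model_P2low_unique al : P2low beta C C k M N al ->
  al = alpha_lo (INR M) (INR N) m k.
Proof.
  intros HP. pose proof (alpha_lo_bounds _ _ _ _ M_ge1 m_gt1 m_sq k_pos).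
  symmetry. apply ge_threshold_unique; [lra|]. intros a Ha.
  rewrite <- (alpha_x_shift a).
  rewrite (HP _ (shift_pos a Ha) 0%nat N_pos), (model_P2low _ (shift_pos a Ha) 0%nat N_pos).
  reflexivity.
Qed.

Lemma model_X0_card2 alpha :
  alpha_lo (INR M) (INR N) m k <= alpha_x alpha beta C <= alpha_hi (INR M) m k ->
  X0_card2 alpha beta C C k M N.
Proof.
  intros Ha.
  destruct (sym_eq_two _ _ _ _ M_ge1 m_gt1 m_sq k_pos _ Ha) as [Hneq Hiff].
  do 2 eexists. split; [exact Hneq|]. intros x. rewrite inX0_sym by auto. apply Hiff.
Qed.

End Model.

Lemma deltaC_eq0 beta C c : 0 < beta -> deltaC beta C c = 0 -> c = C.
Proof.
  intros Hb Hd. unfold deltaC in Hd.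
  assert (Hc : c - C = (c - C) / beta * beta) by (field; lra).
  rewrite Hd in Hc. lra.
Qed.

Lemma ybar_rel_dev m k : 0 < m -> 0 < k -> ybar m k / (k / 2) - 1 = / m.
Proof. intros Hm Hk. unfold ybar. field. lra. Qed.

Lemma ybar_rel_dev_bound k N : 0 < k -> (1 <= N)%nat ->
  Rabs (ybar (sqrt (INR N + 1)) k / (k / 2) - 1) <= 1 / sqrt (INR N).
Proof.
  intros Hk HN. pose proof (le_INR 1 N HN) as H1. simpl in H1.
  assert (Hs : 0 < sqrt (INR N)) by (apply sqrt_lt_R0; lra).
  assert (Hle : sqrt (INR N) <= sqrt (INR N + 1)) by (apply sqrt_le_1_alt; lra).
  rewrite ybar_rel_dev by lra.
  rewrite Rabs_pos_eq by (left; apply Rinv_0_lt_compat; lra).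
  unfold Rdiv. rewrite Rmult_1_l. apply Rinv_le_contravar; lra.
Qed.

Theorem lemma7 (M : nat) (beta C c k : R) :
  (1 <= M)%nat -> 0 < beta -> 0 < C -> C <= c -> 0 < k ->
  deltaC beta C c = 0 ->
  exists yb : nat -> R,
    (forall N : nat, (2 <= N)%nat ->
       (* (1): yb N is the unique threshold < k *)
       (yb N < k /\ P1 beta C c k M N (yb N) /\
        (forall y', y' < k -> P1 beta C c k M N y' -> y' = yb N)) /\
       (* (2) *)
       (exists ab : R, 0 <= ab /\ P2up beta C c k M N (yb N) ab /\
          (forall ab', 0 <= ab' -> P2up beta C c k M N (yb N) ab' -> ab' = ab) /\
          exists al : R, al <= ab /\ P2low beta C c k M N al /\
            (forall al', al' <= ab -> P2low beta C c k M N al' -> al' = al) /\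
            (forall alpha, 0 < alpha ->
               al <= alpha_x alpha beta C <= ab ->
               X0_card2 alpha beta C c k M N))) /\
    (* yb N = (1 + O(1/sqrt N)) k/2 as N -> oo *)
    (exists K : R, exists N0 : nat, forall N : nat, (N0 <= N)%nat ->
       Rabs (yb N / (k / 2) - 1) <= K / sqrt (INR N)).
Proof.
  intros HM Hb HC Hcc Hk HdC.
  apply deltaC_eq0 in HdC; [subst c|exact Hb].
  exists (fun N => ybar (sqrt (INR N + 1)) k). split.
  - intros N HN.
    destruct (model_thresholds M N k HM HN Hk) as [Hyk [Hhi Hlohi]].
    split; [split; [exact Hyk|split]|].
    + apply model_P1; auto.
    + apply model_P1_unique; auto.
    + exists (alpha_hi (INR M) (sqrt (INR N + 1)) k). split; [exact Hhi|].
      split; [apply model_P2up; auto|]. split; [apply model_P2up_unique; auto|].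
      exists (alpha_lo (INR M) (INR N) (sqrt (INR N + 1)) k). split; [exact Hlohi|].
      split; [apply model_P2low; auto|]. split.
      * intros al' _. apply model_P2low_unique; auto.
      * intros alpha _. apply model_X0_card2; auto.
  - exists 1, 1%nat. intros N HN. apply ybar_rel_dev_bound; auto.
Qed.
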